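(* Let $G$ be a multiplicative monoid with identity, let $N$ be a $G$-graded near-ring, let $A$ be a totally ordered set and let $(P_a)_{a\in A}$ be a family of graded weakly prime ideals of $N$ such that $P_a\subseteq P_b$ whenever $a\le b$. Then $P=\bigcap_{a\in A}P_a$ is a graded weakly prime ideal of $N$.
   Context: A near-ring $(N,+,\cdot)$ is a set with two binary operations such that $(N,+)$ is a group (not necessarily abelian), $(N,\cdot)$ is a semigroup, and $(a+b)y = ay+by$ for all $a,b,y\in N$. For a multiplicative monoid $G$ with identity, $N$ is a $G$-graded near-ring if there is a family $\{N_\sigma\}_{\sigma\in G}$ of additive normal subgroups of $N$ with $N=\bigoplus_{\sigma\in G}N_\sigma$ and $N_\sigma N_\tau\subseteq N_{\sigma\tau}$. An ideal $P$ is graded if $P=\bigoplus_{\sigma}(P\cap N_\sigma)$. For ideals $I,J$, $IJ$ denotes their product. A graded ideal $P$ is graded weakly prime if for all graded ideals $I,J$ with $\{0\}\neq IJ\subseteq P$, either $I\subseteq P$ or $J\subseteq P$. *)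

From mathcomp Require Import all_boot all_order.
From Stdlib Require List.

Set Implicit Arguments.
Unset Strict Implicit.
Unset Printing Implicit Defensive.

Record monoid := Monoid {
  mcarrier :> Type;
  mop : mcarrier -> mcarrier -> mcarrier;
  mone : mcarrier;
  mopA : forall x y z, mop x (mop y z) = mop (mop x y) z;
  mop1x : forall x, mop mone x = x;
  mopx1 : forall x, mop x mone = x
}.

Record nearRing := NearRing {
  ncarrier :> Type;
  nadd : ncarrier -> ncarrier -> ncarrier;
  nopp : ncarrier -> ncarrier;
  nzero : ncarrier;
  nmul : ncarrier -> ncarrier -> ncarrier;
  naddA : forall x y z, nadd x (nadd y z) = nadd (nadd x y) z;
  nadd0x : forall x, nadd nzero x = x;
  naddx0 : forall x, nadd x nzero = x;
  naddNx : forall x, nadd (nopp x) x = nzero;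
  naddxN : forall x, nadd x (nopp x) = nzero;
  nmulA : forall x y z, nmul x (nmul y z) = nmul (nmul x y) z;
  nmulDl : forall a b y, nmul (nadd a b) y = nadd (nmul a y) (nmul b y)
}.

Section NearRingDefs.
Variable N : nearRing.

Local Notation "x + y" := (nadd x y).
Local Notation "- x" := (nopp x).
Local Notation "x * y" := (nmul x y).
Local Notation "0" := (nzero N).

Definition subsetN (I J : N -> Prop) : Prop := forall x, I x -> J x.

Definition normal_subgroup (S : N -> Prop) : Prop :=
  [/\ S 0,
      (forall x y, S x -> S y -> S (x + y)),
      (forall x, S x -> S (- x)) &
      (forall n x, S x -> S ((n + x) + - n))].

(* ideal of a near-ring (Pilz): normal subgroup with I N ⊆ I and
   n(n'+i) - n n' ∈ I *)
Definition ideal (I : N -> Prop) : Prop :=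
  [/\ normal_subgroup I,
      (forall i n, I i -> I (i * n)) &
      (forall n n' i, I i -> I ((n * (n' + i)) + - (n * n')))].

Definition prodI (I J : N -> Prop) : N -> Prop :=
  fun x => exists i j, [/\ I i, J j & x = i * j].

Definition lsum {G : Type} (s : seq (G * N)) : N :=
  foldr (fun p acc => p.2 + acc) 0 s.

End NearRingDefs.

(* ---------- G-graded near-rings: N = ⊕_{σ∈G} N_σ (internal direct sum
   of additive normal subgroups) with N_σ N_τ ⊆ N_{στ} ---------- *)
Definition graded_near_ring (G : monoid) (N : nearRing) (Ng : G -> N -> Prop)
  : Prop :=
  [/\ (forall g, normal_subgroup (Ng g)),
      (forall x : N, exists s : seq (G * N),
          [/\ List.NoDup (map fst s),
              (forall p, List.In p s -> Ng p.1 p.2) &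
              x = lsum s]),
      (* independence (directness) of the sum *)
      (forall s : seq (G * N),
          List.NoDup (map fst s) ->
          (forall p, List.In p s -> Ng p.1 p.2) ->
          lsum s = nzero N ->
          forall p, List.In p s -> p.2 = nzero N) &
      (forall (g h : G) (x y : N), Ng g x -> Ng h y ->
          Ng (mop g h) (nmul x y))].

(* graded ideal: P = ⊕_σ (P ∩ N_σ) *)
Definition graded_ideal (G : monoid) (N : nearRing) (Ng : G -> N -> Prop)
  (P : N -> Prop) : Prop :=
  ideal P /\
  forall x : N, P x -> exists s : seq (G * N),
      [/\ List.NoDup (map fst s),
          (forall p, List.In p s -> Ng p.1 p.2 /\ P p.2) &
          x = lsum s].

Definition graded_weakly_prime (G : monoid) (N : nearRing) (Ng : G -> N -> Prop)
  (P : N -> Prop) : Prop :=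
  graded_ideal Ng P /\
  forall I J : N -> Prop,
    graded_ideal Ng I -> graded_ideal Ng J ->
    ~ (forall x, prodI I J x <-> x = nzero N) ->
    subsetN (prodI I J) P ->
    subsetN I P \/ subsetN J P.

(* Weak primality passes to the intersection P of the chain: if the nonzero
   product IJ lies in P but I and J do not, take x in I outside P_a and y in J
   outside P_b with, say, a <= b; as I is not contained in P_a, weak primality
   of P_a gives J in P_a, which is contained in P_b, contradicting y.
   Gradedness of P rests on uniqueness of homogeneous components: homogeneous
   elements of distinct degrees commute (their commutator lies in
   N_g ∩ N_h = 0), so summing a homogeneous family over a set of degrees is
   additive, and by directness of the sum also injective.  Hence the
   components of an element of P_a are those of its decomposition inside
   P_a. *)
From mathcomp Require Import all_boot all_order.
From Stdlib Require Import Classical ClassicalEpsilon.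
From Stdlib Require List.

Set Implicit Arguments.
Unset Strict Implicit.
Unset Printing Implicit Defensive.

Section NearRingGroup.
Variable N : nearRing.

Local Notation "x + y" := (nadd x y).
Local Notation "- x" := (nopp x).
Local Notation "0" := (nzero N).

Lemma naddrK (a b : N) : (a + b) + - b = a.
Proof. by rewrite -naddA naddxN naddx0. Qed.

Lemma naddrNK (a b : N) : (a + - b) + b = a.
Proof. by rewrite -naddA naddNx naddx0. Qed.

Lemma nsubr0_eq (a b : N) : a + - b = 0 -> a = b.
Proof. by move=> ab0; rewrite -(naddrNK a b) ab0 nadd0x. Qed.

Lemma ideal_bigcap (T : Type) (P : T -> N -> Prop) :
  (forall t, ideal (P t)) -> ideal (fun x => forall t, P t x).
Proof.
move=> idP; split; first split.
- by move=> t; case: (idP t) => [[]].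
- by move=> x y Px Py t; case: (idP t) => [[_ + _ _] _ _]; apply.
- by move=> x Px t; case: (idP t) => [[_ _ + _] _ _]; apply.
- by move=> n x Px t; case: (idP t) => [[_ _ _ +] _ _]; apply.
- by move=> i n Pi t; case: (idP t) => [_ + _]; apply.
- by move=> n n' i Pi t; case: (idP t) => [_ _ +]; apply.
Qed.

End NearRingGroup.

Section HomogeneousComponents.
Variables (G : monoid) (N : nearRing) (Ng : G -> N -> Prop).
Hypothesis gradedN : graded_near_ring Ng.

Local Notation "x + y" := (nadd x y).
Local Notation "- x" := (nopp x).
Local Notation "0" := (nzero N).

Lemma homog0 g : Ng g 0.
Proof. by case: gradedN => + _ _ _ => /(_ g) []. Qed.

Lemma homogD g x y : Ng g x -> Ng g y -> Ng g (x + y).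
Proof. by case: gradedN => + _ _ _ => /(_ g) [] _ + _ _; apply. Qed.

Lemma homogN g x : Ng g x -> Ng g (- x).
Proof. by case: gradedN => + _ _ _ => /(_ g) [] _ _ + _; apply. Qed.

Lemma homog_conj g n x : Ng g x -> Ng g ((n + x) + - n).
Proof. by case: gradedN => + _ _ _ => /(_ g) [] _ _ _; apply. Qed.

Lemma homog_inter_eq0 g h c : g <> h -> Ng g c -> Ng h c -> c = 0.
Proof.
move=> gh Ngc Nhc; case: gradedN => _ _ direct _.
apply: (direct [:: (g, c); (h, - c)] _ _ _ (g, c)); last by left.
- by constructor; [case=> // /esym|constructor; [|constructor]].
- by move=> p [<-|[<-|[]]] //=; apply: homogN.
- by rewrite /lsum /= naddx0 naddxN.
Qed.

Lemma homog_addC g h x y : g <> h -> Ng g x -> Ng h y -> x + y = y + x.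
Proof.
move=> gh Ngx Nhy.
have Nh_comm : Ng h (((x + y) + - x) + - y).
  by apply: homogD; [apply: homog_conj|apply: homogN].
have Ng_comm : Ng g (((x + y) + - x) + - y).
  by rewrite -!naddA; apply: homogD; rewrite // naddA; apply/homog_conj/homogN.
have /nsubr0_eq conj_y := homog_inter_eq0 gh Ng_comm Nh_comm.
by rewrite -{2}conj_y naddrNK.
Qed.

Definition homogeneous (f : G -> N) := forall g, Ng g (f g).

Definition graph (D : seq G) (f : G -> N) : seq (G * N) := [seq (g, f g) | g <- D].

Lemma map_fst_graph D f : map fst (graph D f) = D.
Proof. by elim: D => //= g D ->. Qed.

Lemma eq_graph D f f' : f =1 f' -> graph D f = graph D f'.
Proof. by move=> eq_f; apply: eq_map => g; rewrite eq_f. Qed.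

Definition single (h : G) (y : N) (g : G) : N :=
  if excluded_middle_informative (g = h) then y else 0.

Definition component (s : seq (G * N)) : G -> N :=
  foldr (fun p f g => single p.1 p.2 g + f g) (fun => 0) s.

Lemma single_id h y : single h y h = y.
Proof. by rewrite /single; case: excluded_middle_informative => //= /(_ erefl). Qed.

Lemma single_neq h y g : g <> h -> single h y g = 0.
Proof. by move=> gh; rewrite /single; case: excluded_middle_informative. Qed.

Lemma homogeneous_single h y : Ng h y -> homogeneous (single h y).
Proof.
move=> Nhy g; case: (classic (g = h)) => [->|gh]; first by rewrite single_id.
by rewrite single_neq //; apply: homog0.
Qed.

Lemma homogeneous_component s :
  (forall p, List.In p s -> Ng p.1 p.2) -> homogeneous (component s).
Proof.
elim: s => [_ g|p s IHs Ns g] /=; first exact: homog0.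
apply: homogD; first by apply/homogeneous_single/Ns; left.
by apply: IHs => q sq; apply: Ns; right.
Qed.

Lemma component_notin s h : ~ List.In h (map fst s) -> component s h = 0.
Proof.
elim: s => [|p s IHs] //= /Decidable.not_or[ph hs].
by rewrite IHs // single_neq ?naddx0 // => hp; case: ph.
Qed.

Lemma component_in s p :
  List.NoDup (map fst s) -> List.In p s -> component s p.1 = p.2.
Proof.
elim: s => [|q s IHs] //= /List.NoDup_cons_iff[qs uniq_s] [<-|ps].
  by rewrite component_notin // single_id naddx0.
rewrite IHs // single_neq ?nadd0x // => pq.
by case: qs; rewrite -pq; apply: List.in_map.
Qed.

Lemma component_closed (P : N -> Prop) s g :
  P 0 -> (forall x y, P x -> P y -> P (x + y)) ->
  (forall p, List.In p s -> P p.2) -> P (component s g).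
Proof.
move=> P0 PD; elim: s => [|p s IHs] //= Ps.
apply: PD; last by apply: IHs => q sq; apply: Ps; right.
case: (classic (g = p.1)) => [->|gp]; last by rewrite single_neq.
by rewrite single_id; apply: Ps; left.
Qed.

Lemma lsum_graph0 D f : (forall g, List.In g D -> f g = 0) -> lsum (graph D f) = 0.
Proof.
elim: D => [|g D IHD] //= f0.
by rewrite /lsum /= -/(lsum _) f0 ?IHD ?naddx0 // => [h Dh|]; [apply: f0; right|left].
Qed.

Lemma lsum_graph_single D h y :
  List.NoDup D -> List.In h D -> lsum (graph D (single h y)) = y.
Proof.
elim: D => [|g D IHD] //= /List.NoDup_cons_iff[gD uniqD] hD.
rewrite /lsum /= -/(lsum _); case: (classic (g = h)) => [gh|hg].
  rewrite -gh single_id lsum_graph0 ?naddx0 // => k Dk.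
  by apply: single_neq => kg; case: gD; rewrite -kg.
by rewrite single_neq // nadd0x IHD //; case: hD.
Qed.

Lemma lsum_graph_commute D f g y : ~ List.In g D -> homogeneous f -> Ng g y ->
  lsum (graph D f) + y = y + lsum (graph D f).
Proof.
move=> + homf Ngy; elim: D => [|h D IHD] /=; first by rewrite /lsum /= nadd0x naddx0.
move=> /Decidable.not_or[hg gD]; rewrite /lsum /= -/(lsum _).
by rewrite -naddA IHD // !naddA (homog_addC _ (homf h) Ngy) // => hg'; case: hg.
Qed.

Lemma lsum_graphD D f f' : List.NoDup D -> homogeneous f -> homogeneous f' ->
  lsum (graph D (fun g => f g + f' g)) = lsum (graph D f) + lsum (graph D f').
Proof.
move=> + homf homf'; elim: D => [|g D IHD] /=; first by rewrite /lsum /= naddx0.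
move=> /List.NoDup_cons_iff[gD uniqD]; rewrite /lsum /= -!/(lsum _) IHD //.
by rewrite -!naddA (naddA (f' g)) -(lsum_graph_commute gD homf (homf' g)) !naddA.
Qed.

Lemma lsum_graph_eq0 D f : List.NoDup D -> homogeneous f ->
  lsum (graph D f) = 0 -> forall g, List.In g D -> f g = 0.
Proof.
move=> uniqD homf sum0 g Dg; case: gradedN => _ _ direct _.
apply: (direct (graph D f) _ _ sum0 (g, f g)); last exact: List.in_map.
- by rewrite map_fst_graph.
- by move=> _ /List.in_map_iff[h [<- _]]; apply: homf.
Qed.

Lemma lsum_graph_inj D f f' : List.NoDup D -> homogeneous f -> homogeneous f' ->
  lsum (graph D f) = lsum (graph D f') -> forall g, List.In g D -> f g = f' g.
Proof.
move=> uniqD homf homf' eq_sum g Dg.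
have homd : homogeneous (fun g => f g + - f' g) by move=> h; apply/homogD/homogN.
apply/nsubr0_eq/(lsum_graph_eq0 uniqD homd) => //.
have := lsum_graphD uniqD homd homf'.
rewrite (@eq_graph _ _ f) ?eq_sum => [sum_eq|h]; last exact: naddrNK.
by rewrite -(naddrK (lsum (graph D _)) (lsum (graph D f'))) -sum_eq naddxN.
Qed.

Lemma lsum_graph_component D s : List.NoDup D ->
  (forall p, List.In p s -> Ng p.1 p.2 /\ List.In p.1 D) ->
  lsum (graph D (component s)) = lsum s.
Proof.
move=> uniqD; elim: s => [|p s IHs] Ns /=; first exact: lsum_graph0.
have [Np Dp] := Ns p (or_introl erefl).
have Ns' q : List.In q s -> Ng q.1 q.2 by move=> sq; case: (Ns q (or_intror sq)).
rewrite lsum_graphD ?lsum_graph_single ?IHs //; first by move=> q sq; apply: Ns; right.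
- exact: homogeneous_single.
- exact: homogeneous_component Ns'.
Qed.

Lemma homogeneous_decomposition_in_graded_ideal (P : N -> Prop) s :
  graded_ideal Ng P -> List.NoDup (map fst s) ->
  (forall p, List.In p s -> Ng p.1 p.2) -> P (lsum s) ->
  forall p, List.In p s -> P p.2.
Proof.
move=> [[[P0 PD _ _] _ _] decP] uniq_s Ns /decP[t [_ Pt sum_eq]] p sp.
pose D := List.nodup (fun g h : G => excluded_middle_informative (g = h))
                     (map fst s ++ map fst t).
have uniqD : List.NoDup D by apply: List.NoDup_nodup.
have inD q : List.In q s \/ List.In q t -> List.In q.1 D.
  by move=> sqt; apply/List.nodup_In/List.in_or_app; case: sqt => /(List.in_map fst); auto.
have Ds q : List.In q s -> Ng q.1 q.2 /\ List.In q.1 D by split; auto.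
have Dt q : List.In q t -> Ng q.1 q.2 /\ List.In q.1 D.
  by move=> tq; have [] := Pt q tq; auto.
have comp_eq : component s p.1 = component t p.1.
  apply: (lsum_graph_inj uniqD) (inD p (or_introl sp)).
  - by apply: homogeneous_component => q /Ds[].
  - by apply: homogeneous_component => q /Dt[].
  by rewrite !lsum_graph_component // sum_eq.
rewrite -(component_in uniq_s sp) comp_eq.
by apply: component_closed => // q /Pt[].
Qed.

Lemma graded_ideal_bigcap (T : Type) (P : T -> N -> Prop) :
  (forall t, graded_ideal Ng (P t)) -> graded_ideal Ng (fun x => forall t, P t x).
Proof.
move=> grP; split; first by apply: ideal_bigcap => t; case: (grP t).
move=> x Px; case: gradedN => _ /(_ x)[s [uniq_s Ns x_eq]] _ _.
exists s; split=> // p sp; split=> [|t]; first exact: Ns.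
have := Px t; rewrite x_eq => Pt_sum.
exact: (homogeneous_decomposition_in_graded_ideal (grP t) uniq_s Ns Pt_sum).
Qed.

End HomogeneousComponents.

Lemma chain_bigcap_subset_or (T : Type) (d : Order.disp_t) (A : orderType d)
    (P : A -> T -> Prop) (I J : T -> Prop) :
  (forall a b, (a <= b)%O -> forall x, P a x -> P b x) ->
  (forall a, (forall x, I x -> P a x) \/ (forall x, J x -> P a x)) ->
  (forall x, I x -> forall a, P a x) \/ (forall x, J x -> forall a, P a x).
Proof.
move=> Pmono IJP.
case: (classic (forall x, I x -> forall a, P a x)) => [|notI]; [by left|right].
have [a [x0 [Ix0 notPx0]]] : exists a x, I x /\ ~ P a x.
  apply: NNPP => noWitness; apply: notI => x Ix a.
  by apply: NNPP => notPx; apply: noWitness; exists a, x.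
move=> y Jy b; case/orP: (Order.TotalTheory.le_total a b) => [ab|ba].
  by case: (IJP a) => [/(_ x0 Ix0)//|/(_ y Jy)]; apply: Pmono.
by case: (IJP b) => [/(_ x0 Ix0)/(Pmono _ _ ba)//|]; apply.
Qed.

Theorem proposition3 (G : monoid) (N : nearRing) (Ng : G -> N -> Prop)
  (d : Order.disp_t) (A : orderType d) (P : A -> N -> Prop) :
  graded_near_ring Ng ->
  (forall a, graded_weakly_prime Ng (P a)) ->
  (forall a b : A, (a <= b)%O -> subsetN (P a) (P b)) ->
  graded_weakly_prime Ng (fun x => forall a : A, P a x).
Proof.
move=> gradedN primeP Pmono; split.
  by apply: graded_ideal_bigcap => // a; case: (primeP a).
move=> I J grI grJ IJ_neq0 IJ_sub.
apply: (chain_bigcap_subset_or Pmono) => a.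
by case: (primeP a) => _ /(_ I J grI grJ IJ_neq0); apply=> x /IJ_sub.
Qed.
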